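(* Let $\sigma$ be a closed convex curve in $\mathbb R^2$ and suppose that, near $q=(0,0)\in\sigma$, $\sigma$ is the graph of a convex function $f$ with $f(0)=0$, such that $f'(0)=0$ and the one-sided derivatives $f'_\pm$ are differentiable at $0$ with derivative $A\ge0$ (so $f'_\pm(t)=At+o(t)$ as $t\to0$). Then the osculating curvature of $\sigma$ at $q$ exists and equals $A$.
   Context: For three points $p_1,p_2,p_3\in\mathbb R^2$ forming a triangle of area $\mathcal A$, $\chi_0(p_1,p_2,p_3)=\frac{4\mathcal A}{|p_1p_2||p_2p_3||p_3p_1|}$ (the curvature of the circle through them). The osculating curvature of $\sigma$ at $q$ is $\lim\chi_0(p,q,m)$ as $p,m\to q$ along $\sigma$ from opposite sides of $q$. *)

From Stdlib Require Import Reals.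
From Coquelicot Require Import Coquelicot.
Open Scope R_scope.

Definition pt := (R * R)%type.

Definition edist (p q : pt) : R :=
  sqrt ((fst p - fst q) ^ 2 + (snd p - snd q) ^ 2).

Definition tri_area (p1 p2 p3 : pt) : R :=
  Rabs ((fst p2 - fst p1) * (snd p3 - snd p1)
        - (fst p3 - fst p1) * (snd p2 - snd p1)) / 2.

Definition chi0 (p1 p2 p3 : pt) : R :=
  4 * tri_area p1 p2 p3 / (edist p1 p2 * edist p2 p3 * edist p3 p1).

Definition convex_set (K : pt -> Prop) : Prop :=
  forall p q (l : R), K p -> K q -> 0 <= l <= 1 ->
    K (l * fst p + (1 - l) * fst q, l * snd p + (1 - l) * snd q).

Definition bounded_set (K : pt -> Prop) : Prop :=
  exists M, forall p, K p -> Rabs (fst p) <= M /\ Rabs (snd p) <= M.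

Definition closed_set (K : pt -> Prop) : Prop :=
  forall p, ~ K p -> exists r, 0 < r /\ forall x, edist x p < r -> ~ K x.

Definition has_interior (K : pt -> Prop) : Prop :=
  exists c r, 0 < r /\ forall x, edist x c < r -> K x.

Definition boundary (K : pt -> Prop) (p : pt) : Prop :=
  forall e, 0 < e -> (exists x, edist x p < e /\ K x) /\
                     (exists x, edist x p < e /\ ~ K x).

Definition closed_convex_curve (sigma : pt -> Prop) : Prop :=
  exists K, convex_set K /\ bounded_set K /\ closed_set K /\ has_interior K /\
    forall p, sigma p <-> boundary K p.

Definition convex_on (a b : R) (f : R -> R) : Prop :=
  forall x y l, a < x < b -> a < y < b -> 0 <= l <= 1 ->
    f (l * x + (1 - l) * y) <= l * f x + (1 - l) * f y.

Definition right_deriv (f : R -> R) (x l : R) : Prop :=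
  filterlim (fun h => (f (x + h) - f x) / h) (at_right 0) (locally l).

Definition left_deriv (f : R -> R) (x l : R) : Prop :=
  filterlim (fun h => (f (x + h) - f x) / h) (at_left 0) (locally l).

(* Osculating curvature of sigma at q equals kappa: lim chi0(p,q,m) = kappa as
   p, m -> q along sigma from opposite sides of q; the two sides are given by
   the sign of the coordinate function [side] (with side q = 0). *)
Definition osculating_curvature_is (sigma : pt -> Prop) (side : pt -> R)
    (q : pt) (kappa : R) : Prop :=
  forall eps, 0 < eps -> exists eta, 0 < eta /\
    forall p m, sigma p -> sigma m -> edist p q < eta -> edist m q < eta ->
      side p < 0 -> 0 < side m -> Rabs (chi0 p q m - kappa) < eps.

(* Convexity squeezes every increment f t - f s (s < t) between f'_+(s) (t - s)
   and f'_-(t) (t - s).  As f'_+(s), f'_-(s) = A s + o(s), summing these bounds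
   over uniform partitions of [0, t] gives f t = A t^2 / 2 + o(t^2) on both sides
   of 0.  For p = (x, f x), m = (y, f y) with x < 0 < y, twice the area of the
   triangle p q m is then y f x - x f y = A |x| y (y - x) / 2 + o(|x| y (y - x)),
   while the sides have lengths |x|, y, y - x up to factors 1 + O(eta^2), all
   chords near q having slope O(eta). *)

From Stdlib Require Import Reals Lra Psatz.
From Coquelicot Require Import Coquelicot.
Open Scope R_scope.

Lemma convex_on_chord a b f x y z :
  convex_on a b f -> a < x -> x < y -> y < z -> z < b ->
  (z - x) * f y <= (z - y) * f x + (y - x) * f z.
Proof.
  intros Hconv Hax Hxy Hyz Hzb.
  set (l := (z - y) / (z - x)).
  assert (Hl : 0 <= l <= 1).
  { unfold l; split.
    - apply Rdiv_le_0_compat; lra.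
    - apply Rle_div_l; lra. }
  assert (Hy : y = l * x + (1 - l) * z) by (unfold l; field; lra).
  assert (Hfy := Hconv x z l ltac:(lra) ltac:(lra) Hl).
  rewrite <- Hy in Hfy.
  assert (Hzx : 0 < z - x) by lra.
  replace ((z - y) * f x + (y - x) * f z)
    with ((z - x) * (l * f x + (1 - l) * f z)) by (unfold l; field; lra).
  apply Rmult_le_compat_l; lra.
Qed.

Lemma convex_on_slope_le_l a b f x y z :
  convex_on a b f -> a < x -> x < y -> y < z -> z < b ->
  (f y - f x) / (y - x) <= (f z - f x) / (z - x).
Proof.
  intros Hconv Hax Hxy Hyz Hzb.
  assert (Hch := convex_on_chord a b f x y z Hconv Hax Hxy Hyz Hzb).
  apply Rle_div_l; [lra|].
  replace ((f z - f x) / (z - x) * (y - x)) with ((f z - f x) * (y - x) / (z - x))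
    by (field; lra).
  apply Rle_div_r; lra.
Qed.

Lemma convex_on_slope_le_r a b f x y z :
  convex_on a b f -> a < x -> x < y -> y < z -> z < b ->
  (f z - f x) / (z - x) <= (f z - f y) / (z - y).
Proof.
  intros Hconv Hax Hxy Hyz Hzb.
  assert (Hch := convex_on_chord a b f x y z Hconv Hax Hxy Hyz Hzb).
  apply (Rle_div_r _ _ (z - y)); [lra|].
  replace ((f z - f x) / (z - x) * (z - y)) with ((f z - f x) * (z - y) / (z - x))
    by (field; lra).
  apply Rle_div_l; lra.
Qed.

Lemma is_derive_quotient_within (D : R -> Prop) f x l :
  (forall h, D h -> h <> 0) -> is_derive f x l ->
  filterlim (fun h => (f (x + h) - f x) / h) (within D (locally 0)) (locally l).
Proof.
  intros HD Hd P [eps HP].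
  apply is_derive_Reals in Hd.
  destruct (Hd eps (cond_pos eps)) as [d Hdd].
  exists d; intros h Hh HDh.
  change (Rabs (h - 0) < d) in Hh; rewrite Rminus_0_r in Hh.
  apply HP; exact (Hdd h (HD h HDh) Hh).
Qed.

Lemma is_derive_right_deriv_eq f x l l' : is_derive f x l -> right_deriv f x l' -> l' = l.
Proof.
  intros Hd Hr.
  apply (filterlim_locally_unique (F := at_right 0) _ _ _ Hr).
  apply is_derive_quotient_within; [intros h; lra | exact Hd].
Qed.

Lemma is_derive_left_deriv_eq f x l l' : is_derive f x l -> left_deriv f x l' -> l' = l.
Proof.
  intros Hd Hl.
  apply (filterlim_locally_unique (F := at_left 0) _ _ _ Hl).
  apply is_derive_quotient_within; [intros h; lra | exact Hd].
Qed.

Lemma is_derive_linear_approx f x l :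
  is_derive f x l -> forall e, 0 < e -> exists eta, 0 < eta /\
    forall h, Rabs h < eta -> Rabs (f (x + h) - f x - l * h) <= e * Rabs h.
Proof.
  intros Hd e He.
  apply is_derive_Reals in Hd.
  destruct (Hd e He) as [d Hdd].
  exists d; split; [apply cond_pos|].
  intros h Hh.
  destruct (Req_dec h 0) as [->|Hh0].
  - replace (f (x + 0) - f x - l * 0) with 0 by (rewrite Rplus_0_r; ring).
    rewrite Rabs_R0; lra.
  - replace (f (x + h) - f x - l * h) with (((f (x + h) - f x) / h - l) * h)
      by (field; exact Hh0).
    rewrite Rabs_mult.
    apply Rmult_le_compat_r; [apply Rabs_pos | left; exact (Hdd h Hh0 Hh)].
Qed.

Lemma Rmin3_le a b c : Rmin a (Rmin b c) <= a /\ Rmin a (Rmin b c) <= b /\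
  Rmin a (Rmin b c) <= c.
Proof.
  repeat split.
  - apply Rmin_l.
  - eapply Rle_trans; [apply Rmin_r | apply Rmin_l].
  - eapply Rle_trans; [apply Rmin_r | apply Rmin_r].
Qed.

Lemma Rle_of_le_add_div_succ x y c : (forall n : nat, x <= y + c / INR (S n)) -> x <= y.
Proof.
  intros H.
  apply Rnot_lt_le; intros Hyx.
  assert (Hc : 0 < c) by (specialize (H 0%nat); simpl in H; lra).
  destruct (archimed_cor1 ((x - y) / c)) as [n [Hn Hn0]].
  { apply Rdiv_lt_0_compat; lra. }
  destruct n as [|n]; [lia|].
  specialize (H n).
  assert (Hlt : c * / INR (S n) < c * ((x - y) / c)) by (apply Rmult_lt_compat_l; lra).
  replace (c * ((x - y) / c)) with (x - y) in Hlt by (field; lra).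
  unfold Rdiv in H; lra.
Qed.

Section IncrementBounds.

Variables (g : R -> R) (a b eta : R).
Hypothesis g0 : g 0 = 0.
Hypothesis g_increments : forall s t, 0 <= s -> s < t -> t < eta ->
  a * s * (t - s) <= g t - g s <= b * t * (t - s).

Lemma riemann_sum_bounds h : 0 < h -> forall k : nat, INR k * h < eta ->
  a * h ^ 2 * (INR k * (INR k - 1) / 2) <= g (INR k * h) <=
  b * h ^ 2 * (INR k * (INR k + 1) / 2).
Proof.
  intros Hh k; induction k as [|k IH]; intros Hk.
  - change (INR 0) with 0; rewrite (Rmult_0_l h), g0; lra.
  - rewrite S_INR in Hk |- *.
    assert (Hk0 : 0 <= INR k) by apply pos_INR.
    destruct (IH ltac:(nra)) as [IHlo IHhi].
    destruct (g_increments (INR k * h) ((INR k + 1) * h)) as [Lo Hi]; [nra | nra | lra |].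
    split; nra.
Qed.

Lemma quadratic_bounds_of_increments t : 0 <= t -> t < eta ->
  a * t ^ 2 / 2 <= g t <= b * t ^ 2 / 2.
Proof.
  intros Ht0 Ht.
  destruct (Req_dec t 0) as [->|Htn0]; [rewrite g0; lra|].
  assert (Hsum : forall n : nat,
    a * t ^ 2 / 2 - a * t ^ 2 / 2 / INR (S n) <= g t <=
    b * t ^ 2 / 2 + b * t ^ 2 / 2 / INR (S n)).
  { intros n.
    assert (HN : 0 < INR (S n)) by (apply lt_0_INR; lia).
    set (h := t / INR (S n)).
    assert (HNh : INR (S n) * h = t) by (unfold h; field; lra).
    assert (Hh : 0 < h) by (unfold h; apply Rdiv_lt_0_compat; lra).
    destruct (riemann_sum_bounds h Hh (S n) ltac:(lra)) as [Lo Hi].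
    rewrite HNh in Lo, Hi.
    replace (a * h ^ 2 * (INR (S n) * (INR (S n) - 1) / 2))
      with (a * t ^ 2 / 2 - a * t ^ 2 / 2 / INR (S n)) in Lo by (unfold h; field; lra).
    replace (b * h ^ 2 * (INR (S n) * (INR (S n) + 1) / 2))
      with (b * t ^ 2 / 2 + b * t ^ 2 / 2 / INR (S n)) in Hi by (unfold h; field; lra).
    lra. }
  split.
  - apply (Rle_of_le_add_div_succ _ _ (a * t ^ 2 / 2)); intros n.
    destruct (Hsum n); lra.
  - apply (Rle_of_le_add_div_succ _ _ (b * t ^ 2 / 2)); intros n.
    destruct (Hsum n); lra.
Qed.

End IncrementBounds.

Section ConvexGraph.

Variables (f fp fm : R -> R) (delta : R).
Hypothesis f_convex : convex_on (- delta) delta f.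
Hypothesis f_right_deriv : forall x, - delta < x < delta -> right_deriv f x (fp x).
Hypothesis f_left_deriv : forall x, - delta < x < delta -> left_deriv f x (fm x).

Lemma convex_right_deriv_le_slope s t :
  - delta < s -> s < t -> t < delta -> fp s <= (f t - f s) / (t - s).
Proof.
  intros Hs Hst Ht.
  apply (filterlim_le (F := at_right 0) (fun h => (f (s + h) - f s) / h)
           (fun _ => (f t - f s) / (t - s)) (fp s) ((f t - f s) / (t - s))).
  - assert (Hd : 0 < t - s) by lra.
    exists (mkposreal _ Hd); intros h Hh Hpos.
    change (Rabs (h - 0) < t - s) in Hh; rewrite Rminus_0_r, Rabs_pos_eq in Hh by lra.
    replace h with (s + h - s) at 2 by ring.
    apply (convex_on_slope_le_l _ _ _ _ _ _ f_convex); lra.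
  - exact (f_right_deriv s ltac:(lra)).
  - apply filterlim_const.
Qed.

Lemma convex_slope_le_left_deriv s t :
  - delta < s -> s < t -> t < delta -> (f t - f s) / (t - s) <= fm t.
Proof.
  intros Hs Hst Ht.
  apply (filterlim_le (F := at_left 0) (fun _ => (f t - f s) / (t - s))
           (fun h => (f (t + h) - f t) / h) ((f t - f s) / (t - s)) (fm t)).
  - assert (Hd : 0 < t - s) by lra.
    exists (mkposreal _ Hd); intros h Hh Hneg.
    change (Rabs (h - 0) < t - s) in Hh; rewrite Rminus_0_r, Rabs_left in Hh by lra.
    replace ((f (t + h) - f t) / h) with ((f t - f (t + h)) / (t - (t + h)))
      by (field; lra).
    apply (convex_on_slope_le_r _ _ _ _ _ _ f_convex); lra.
  - apply filterlim_const.
  - exact (f_left_deriv t ltac:(lra)).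
Qed.

Lemma convex_increment_bounds s t :
  - delta < s -> s < t -> t < delta ->
  fp s * (t - s) <= f t - f s <= fm t * (t - s).
Proof.
  intros Hs Hst Ht.
  split.
  - apply Rle_div_r; [lra|]. exact (convex_right_deriv_le_slope s t Hs Hst Ht).
  - apply Rle_div_l; [lra|]. exact (convex_slope_le_left_deriv s t Hs Hst Ht).
Qed.

Variable A : R.
Hypothesis delta_gt0 : 0 < delta.
Hypothesis f0 : f 0 = 0.
Hypothesis f_derive0 : is_derive f 0 0.
Hypothesis fp_derive0 : is_derive fp 0 A.
Hypothesis fm_derive0 : is_derive fm 0 A.

Lemma one_sided_derivs_linear_approx e : 0 < e -> exists eta, 0 < eta /\ eta <= delta /\
  forall s, Rabs s < eta ->
    Rabs (fp s - A * s) <= e * Rabs s /\ Rabs (fm s - A * s) <= e * Rabs s.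
Proof.
  intros He.
  assert (Hfp0 : fp 0 = 0)
    by exact (is_derive_right_deriv_eq f 0 0 _ f_derive0 (f_right_deriv 0 ltac:(lra))).
  assert (Hfm0 : fm 0 = 0)
    by exact (is_derive_left_deriv_eq f 0 0 _ f_derive0 (f_left_deriv 0 ltac:(lra))).
  destruct (is_derive_linear_approx fp 0 A fp_derive0 e He) as [eta1 [Heta1 Hfp]].
  destruct (is_derive_linear_approx fm 0 A fm_derive0 e He) as [eta2 [Heta2 Hfm]].
  set (eta := Rmin delta (Rmin eta1 eta2)).
  assert (Heta := Rmin3_le delta eta1 eta2); fold eta in Heta.
  exists eta; split; [unfold eta; repeat apply Rmin_pos; assumption|].
  split; [lra|].
  intros s Hs.
  specialize (Hfp s ltac:(lra)); specialize (Hfm s ltac:(lra)).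
  rewrite Rplus_0_l, Hfp0, Rminus_0_r in Hfp.
  rewrite Rplus_0_l, Hfm0, Rminus_0_r in Hfm.
  split; assumption.
Qed.

Section DerivativeBand.

Variables (e eta : R).
Hypothesis eta_le_delta : eta <= delta.
Hypothesis derivs_band : forall s, Rabs s < eta ->
  Rabs (fp s - A * s) <= e * Rabs s /\ Rabs (fm s - A * s) <= e * Rabs s.

Lemma convex_quadratic_bounds_pos t : 0 <= t -> t < eta ->
  (A - e) * t ^ 2 / 2 <= f t <= (A + e) * t ^ 2 / 2.
Proof.
  apply (quadratic_bounds_of_increments f); [exact f0|].
  intros s t' Hs Hst Ht.
  destruct (derivs_band s ltac:(rewrite Rabs_pos_eq; lra)) as [Hps _].
  destruct (derivs_band t' ltac:(rewrite Rabs_pos_eq; lra)) as [_ Hmt].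
  destruct (convex_increment_bounds s t' ltac:(lra) Hst ltac:(lra)).
  rewrite (Rabs_pos_eq s) in Hps by lra.
  rewrite (Rabs_pos_eq t') in Hmt by lra.
  apply Rabs_le_between in Hps; apply Rabs_le_between in Hmt.
  split; nra.
Qed.

Lemma convex_quadratic_bounds_neg t : 0 <= t -> t < eta ->
  (A - e) * t ^ 2 / 2 <= f (- t) <= (A + e) * t ^ 2 / 2.
Proof.
  apply (quadratic_bounds_of_increments (fun t => f (- t))); [rewrite Ropp_0; exact f0|].
  intros s t' Hs Hst Ht.
  destruct (derivs_band (- s) ltac:(rewrite Rabs_Ropp, Rabs_pos_eq; lra)) as [_ Hms].
  destruct (derivs_band (- t') ltac:(rewrite Rabs_Ropp, Rabs_pos_eq; lra)) as [Hpt _].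
  destruct (convex_increment_bounds (- t') (- s) ltac:(lra) ltac:(lra) ltac:(lra)).
  rewrite Rabs_Ropp, (Rabs_pos_eq s) in Hms by lra.
  rewrite Rabs_Ropp, (Rabs_pos_eq t') in Hpt by lra.
  apply Rabs_le_between in Hms; apply Rabs_le_between in Hpt.
  split; nra.
Qed.

End DerivativeBand.

Lemma convex_quadratic_approx e : 0 < e -> exists eta, 0 < eta /\
  forall x, Rabs x < eta -> Rabs (f x - A * x ^ 2 / 2) <= e * x ^ 2.
Proof.
  intros He.
  destruct (one_sided_derivs_linear_approx e He) as (eta & Heta & Hdelta & Hband).
  exists eta; split; [exact Heta|].
  intros x Hx.
  assert (Hquad : (A - e) * x ^ 2 / 2 <= f x <= (A + e) * x ^ 2 / 2).
  { destruct (Rle_or_lt 0 x) as [Hx0|Hx0].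
    - rewrite Rabs_pos_eq in Hx by lra.
      exact (convex_quadratic_bounds_pos e eta Hdelta Hband x Hx0 Hx).
    - rewrite Rabs_left in Hx by lra.
      assert (Hneg := convex_quadratic_bounds_neg e eta Hdelta Hband (- x)
                        ltac:(lra) ltac:(lra)).
      rewrite Ropp_involutive in Hneg.
      replace (x ^ 2) with ((- x) ^ 2) by ring.
      exact Hneg. }
  apply Rabs_le; nra.
Qed.

End ConvexGraph.

Lemma Rabs_fst_le_edist p q : Rabs (fst p - fst q) <= edist p q.
Proof.
  unfold edist.
  rewrite <- (sqrt_pow2 (Rabs _)) by apply Rabs_pos.
  apply sqrt_le_1_alt.
  rewrite pow2_abs.
  assert (0 <= (snd p - snd q) ^ 2) by (apply pow2_ge_0).
  lra.
Qed.

Lemma edist_le_of_slope p q sigma :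
  Rabs (snd p - snd q) <= sigma * Rabs (fst p - fst q) ->
  edist p q <= (1 + sigma ^ 2) * Rabs (fst p - fst q).
Proof.
  intros Hslope.
  assert (Hdx := Rabs_pos (fst p - fst q)).
  assert (Hdy := Rabs_pos (snd p - snd q)).
  unfold edist.
  rewrite <- (sqrt_pow2 ((1 + sigma ^ 2) * _)) by nra.
  apply sqrt_le_1_alt.
  rewrite <- (pow2_abs (fst p - fst q)), <- (pow2_abs (snd p - snd q)).
  nra.
Qed.

Lemma Rabs_div_sub_le k rho A eps theta :
  0 <= A -> Rabs (k - A) <= eps -> 1 <= rho <= 1 + theta ->
  Rabs (k / rho - A) <= eps + A * theta.
Proof.
  intros HA Hk Hrho.
  assert (Hw : 0 < / rho <= 1).
  { split; [apply Rinv_0_lt_compat; lra|].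
    rewrite <- Rinv_1; apply Rinv_le_contravar; lra. }
  replace (k / rho - A) with ((k - A) * / rho - A * (rho - 1) * / rho)
    by (field; lra).
  assert (Herr : Rabs ((k - A) * / rho) <= eps).
  { rewrite Rabs_mult, (Rabs_pos_eq (/ rho)) by lra.
    assert (0 <= Rabs (k - A)) by apply Rabs_pos.
    nra. }
  assert (Hbias : 0 <= A * (rho - 1) * / rho <= A * theta).
  { split; [apply Rmult_le_pos; nra|].
    assert (0 <= A * (rho - 1)) by nra.
    nra. }
  apply Rabs_le_between in Herr.
  apply Rabs_le; lra.
Qed.

Lemma chi0_origin x u y v :
  chi0 (x, u) (0, 0) (y, v) =
  2 * Rabs (y * u - x * v) /
    (edist (x, u) (0, 0) * edist (0, 0) (y, v) * edist (y, v) (x, u)).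
Proof.
  unfold chi0, tri_area; cbn [fst snd].
  replace ((0 - x) * (v - u) - (y - x) * (0 - u)) with (y * u - x * v) by ring.
  replace (4 * (Rabs (y * u - x * v) / 2)) with (2 * Rabs (y * u - x * v)) by field.
  reflexivity.
Qed.

Lemma cross_product_quadratic_approx A e x y u v :
  0 <= A -> x < 0 -> 0 < y ->
  Rabs (u - A * x ^ 2 / 2) <= e * x ^ 2 -> Rabs (v - A * y ^ 2 / 2) <= e * y ^ 2 ->
  Rabs (2 * Rabs (y * u - x * v) / (- x * y * (y - x)) - A) <= 2 * e.
Proof.
  intros HA Hx Hy Hux Hvy.
  set (L := - x * y * (y - x)).
  assert (HL : 0 < L) by (unfold L; apply Rmult_lt_0_compat; nra).
  apply Rabs_le_between in Hux; apply Rabs_le_between in Hvy.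
  assert (Hyu : y * (- (e * x ^ 2)) <= y * (u - A * x ^ 2 / 2) <= y * (e * x ^ 2))
    by (split; apply Rmult_le_compat_l; lra).
  assert (Hxv : - x * (- (e * y ^ 2)) <= - x * (v - A * y ^ 2 / 2) <= - x * (e * y ^ 2))
    by (split; apply Rmult_le_compat_l; lra).
  replace (2 * Rabs (y * u - x * v) / L) with (Rabs (2 * (y * u - x * v) / L))
    by (rewrite Rabs_div, Rabs_mult, (Rabs_pos_eq 2), (Rabs_pos_eq L); lra).
  rewrite <- (Rabs_pos_eq A) by exact HA.
  eapply Rle_trans; [apply Rabs_triang_inv2|].
  replace (2 * (y * u - x * v) / L - A) with ((2 * (y * u - x * v) - A * L) / L)
    by (field; lra).
  rewrite Rabs_div, (Rabs_pos_eq L) by lra.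
  apply Rle_div_l; [lra|].
  apply Rabs_le; unfold L; split; nra.
Qed.

Lemma chi0_near_origin A e sigma x y u v :
  0 <= A -> 0 <= sigma <= 1 -> x < 0 -> 0 < y ->
  Rabs u <= sigma * Rabs x -> Rabs v <= sigma * Rabs y ->
  Rabs (u - A * x ^ 2 / 2) <= e * x ^ 2 -> Rabs (v - A * y ^ 2 / 2) <= e * y ^ 2 ->
  Rabs (chi0 (x, u) (0, 0) (y, v) - A) <= 2 * e + A * (7 * sigma ^ 2).
Proof.
  intros HA Hsigma Hx Hy Hu Hv Hux Hvy.
  rewrite (Rabs_left x) in Hu by lra; rewrite (Rabs_pos_eq y) in Hv by lra.
  set (L := - x * y * (y - x)).
  assert (HL : 0 < L) by (unfold L; apply Rmult_lt_0_compat; nra).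
  assert (Hnum := cross_product_quadratic_approx A e x y u v HA Hx Hy Hux Hvy).
  fold L in Hnum.
  assert (Hp := edist_le_of_slope (x, u) (0, 0) sigma).
  assert (Hq := edist_le_of_slope (0, 0) (y, v) sigma).
  assert (Hm := edist_le_of_slope (y, v) (x, u) sigma).
  assert (Hp' := Rabs_fst_le_edist (x, u) (0, 0)).
  assert (Hq' := Rabs_fst_le_edist (0, 0) (y, v)).
  assert (Hm' := Rabs_fst_le_edist (y, v) (x, u)).
  cbn [fst snd] in Hp, Hq, Hm, Hp', Hq', Hm'.
  rewrite !Rminus_0_r, !Rminus_0_l, !Rabs_Ropp, (Rabs_left x), (Rabs_pos_eq y),
    (Rabs_pos_eq (y - x)) in * by lra.
  specialize (Hp ltac:(lra)). specialize (Hq ltac:(lra)).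
  specialize (Hm ltac:(eapply Rle_trans; [apply Rabs_triang | rewrite Rabs_Ropp]; lra)).
  set (D := edist (x, u) (0, 0) * edist (0, 0) (y, v) * edist (y, v) (x, u)).
  assert (HD : L <= D <= (1 + sigma ^ 2) ^ 3 * L).
  { unfold D, L; split.
    - apply Rmult_le_compat; [nra | lra | apply Rmult_le_compat; lra | lra].
    - replace ((1 + sigma ^ 2) ^ 3 * (- x * y * (y - x)))
        with ((1 + sigma ^ 2) * - x * ((1 + sigma ^ 2) * y) * ((1 + sigma ^ 2) * (y - x)))
        by ring.
      apply Rmult_le_compat; [nra | lra | apply Rmult_le_compat; lra | lra]. }
  assert (Hcube : (1 + sigma ^ 2) ^ 3 <= 1 + 7 * sigma ^ 2).
  { assert (Hs : 0 <= sigma ^ 2 <= 1) by nra.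
    destruct Hs as [Hs0 Hs1].
    assert (0 <= sigma ^ 2 * sigma ^ 2 <= sigma ^ 2) by nra.
    nra. }
  rewrite chi0_origin; fold D.
  replace (2 * Rabs (y * u - x * v) / D) with (2 * Rabs (y * u - x * v) / L / (D / L))
    by (field; lra).
  apply Rabs_div_sub_le; [exact HA | exact Hnum |].
  split; [apply Rle_div_r | apply Rle_div_l]; nra.
Qed.

Lemma chi0_tends_of_quadratic_approx A : 0 <= A ->
  forall eps, 0 < eps -> exists e, 0 < e /\ exists eta, 0 < eta /\
    forall x y u v, - eta < x < 0 -> 0 < y < eta ->
      Rabs (u - A * x ^ 2 / 2) <= e * x ^ 2 -> Rabs (v - A * y ^ 2 / 2) <= e * y ^ 2 ->
      Rabs (chi0 (x, u) (0, 0) (y, v) - A) < eps.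
Proof.
  intros HA eps Heps.
  set (e := eps / 8).
  set (tau := Rmin 1 (eps / (14 * (A + 1)))).
  set (c := A / 2 + e + 1).
  assert (He : 0 < e) by (unfold e; lra).
  assert (Hc : 0 < c) by (unfold c; lra).
  assert (Htau0 : 0 < tau) by (apply Rmin_pos; [lra | apply Rdiv_lt_0_compat; lra]).
  assert (Htau1 : tau <= 1) by apply Rmin_l.
  assert (Htau : 14 * (A + 1) * tau <= eps).
  { rewrite Rmult_comm; apply Rle_div_r; [lra | apply Rmin_r]. }
  assert (Hslope : forall z w, Rabs z < tau / c -> Rabs (w - A * z ^ 2 / 2) <= e * z ^ 2 ->
                     Rabs w <= tau * Rabs z).
  { intros z w Hz Hw.
    apply Rabs_le_between in Hw.
    rewrite <- pow2_abs in Hw.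
    assert (Hz0 := Rabs_pos z).
    assert (Hcz : c * Rabs z <= tau).
    { rewrite Rmult_comm; apply Rle_div_r; lra. }
    apply Rabs_le; unfold c in Hcz; nra. }
  exists e; split; [exact He|].
  exists (tau / c); split; [apply Rdiv_lt_0_compat; lra|].
  intros x y u v Hx Hy Hu Hv.
  apply Rle_lt_trans with (2 * e + A * (7 * tau ^ 2)).
  - apply chi0_near_origin; try lra; apply Hslope; try assumption;
      [rewrite Rabs_left | rewrite Rabs_pos_eq]; lra.
  - unfold e; nra.
Qed.

Theorem proposition7p1
  (sigma : pt -> Prop) (f fp fm : R -> R) (delta r A : R) :
  closed_convex_curve sigma ->
  0 < delta -> 0 < r ->
  (* near q = (0,0), sigma is the graph of f over (-delta, delta) *)
  (forall p, edist p (0, 0) < r ->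
     (sigma p <-> (- delta < fst p < delta /\ snd p = f (fst p)))) ->
  convex_on (- delta) delta f ->
  f 0 = 0 ->
  is_derive f 0 0 ->
  (* fp, fm are the one-sided derivatives f'_+, f'_- on (-delta, delta) *)
  (forall x, - delta < x < delta -> right_deriv f x (fp x)) ->
  (forall x, - delta < x < delta -> left_deriv f x (fm x)) ->
  0 <= A ->
  is_derive fp 0 A -> is_derive fm 0 A ->
  osculating_curvature_is sigma fst (0, 0) A.
Proof.
  (* Only the local graph description of sigma is needed. *)
  intros _ Hdelta Hr Hgraph Hconv Hf0 Hf' Hfp Hfm HA HfpA HfmA eps Heps.
  destruct (chi0_tends_of_quadratic_approx A HA eps Heps)
    as (e & He & eta1 & Heta1 & Hchi).
  destruct (convex_quadratic_approx f fp fm delta Hconv Hfp Hfm A Hdelta Hf0 Hf' HfpA HfmA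
              e He) as (eta2 & Heta2 & Happrox).
  set (eta := Rmin r (Rmin eta1 eta2)).
  assert (Heta := Rmin3_le r eta1 eta2); fold eta in Heta.
  exists eta; split; [unfold eta; repeat apply Rmin_pos; assumption|].
  intros [x u] [y v] Hp Hm Hpq Hmq Hx Hy; cbn [fst] in Hx, Hy.
  assert (Hxeta := Rabs_fst_le_edist (x, u) (0, 0)).
  assert (Hyeta := Rabs_fst_le_edist (y, v) (0, 0)).
  cbn [fst] in Hxeta, Hyeta; rewrite Rminus_0_r in Hxeta, Hyeta.
  destruct (proj1 (Hgraph (x, u) ltac:(lra)) Hp) as [_ Hu].
  destruct (proj1 (Hgraph (y, v) ltac:(lra)) Hm) as [_ Hv].
  cbn [fst snd] in Hu, Hv; subst u v.
  rewrite Rabs_left in Hxeta by lra; rewrite Rabs_pos_eq in Hyeta by lra.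
  apply Hchi; try lra; apply Happrox; [rewrite Rabs_left | rewrite Rabs_pos_eq]; lra.
Qed.
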